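(* Let $(M,\omega)$ be a compact Kähler manifold of complex dimension $n$, $\chi$ a closed real $(1,1)$-form, and $\theta_0\in(0,\pi)$ the argument of $\int_M(\chi+\sqrt{-1}\omega)^n$. Let $\underline u$ be a smooth real function on $M$ with $$A_0:=\max_M\max_{1\le j\le n}\sum_{i\neq j}\operatorname{arccot}\lambda_i(\chi_{\underline u})<\theta_0\quad\text{and}\quad B_0:=\max_M\theta(\chi_{\underline u})<\pi.$$ Then the function $\underline u(x,t):=\underline u(x)$ on $M\times[0,\infty)$ is a subsolution of the parabolic equation $u_t=\cot\theta(\chi_u)-\cot\theta_0$ in the following sense: there exist constants $\delta>0$ and $K>0$ such that for every $(x,t)\in M\times[0,\infty)$ the set $$S_\delta(x,t):=\{(\mu,\tau)\in\mathbb R^n\times\mathbb R:\ \cot\theta\bigl(\lambda(\chi_{\underline u})(x)+\mu\bigr)-\underline u_t(x,t)+\tau=\cot\theta_0,\ \mu_i>-\delta\ \forall i,\ \tau>-\delta\}$$ is contained in the ball of radius $K$ centered at the origin of $\mathbb R^{n+1}$.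
   Context: $\chi_u:=\chi+\sqrt{-1}\partial\bar\partial u$; $\lambda(\chi_u)=(\lambda_1,\dots,\lambda_n)$ are the eigenvalues of $\chi_u$ with respect to $\omega$; $\operatorname{arccot}$ takes values in $(0,\pi)$; for $\lambda\in\mathbb R^n$, $\theta(\lambda):=\sum_i\operatorname{arccot}\lambda_i$ and $\theta(\chi_u):=\theta(\lambda(\chi_u))$. Here $\underline u_t\equiv 0$ since $\underline u$ is time-independent. *)

From Stdlib Require Import Reals.
Open Scope R_scope.

(* arccot with values in (0, pi). *)
Definition arccot (x : R) : R := PI / 2 - atan x.

Definition cot (t : R) : R := cos t / sin t.

Fixpoint sumR (n : nat) (f : nat -> R) : R :=
  match n with
  | O => 0
  | S k => sumR k f + f k
  end.

(* vectors of R^n are represented as functions nat -> R; only indices < n matter *)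

Definition theta (n : nat) (l : nat -> R) : R := sumR n (fun i => arccot (l i)).

Definition theta_except (n : nat) (l : nat -> R) (j : nat) : R :=
  sumR n (fun i => if Nat.eqb i j then 0 else arccot (l i)).

Definition norm_nt (n : nat) (mu : nat -> R) (tau : R) : R :=
  sqrt (sumR n (fun i => mu i ^ 2) + tau ^ 2).

Definition vadd (l m : nat -> R) : nat -> R := fun i => l i + m i.

(* Since arccot is decreasing and 1-Lipschitz, a perturbation with all
   [mu_i > -delta] raises [theta] and every partial sum [theta_except] by at
   most [n delta].  For small [delta] this keeps [theta(lambda + mu)] below
   [(B0 + pi)/2], which bounds [tau] from above through the equation; and
   [tau > -delta] forces [theta(lambda + mu) > (A0 + theta0)/2], so each single
   angle [arccot(lambda_j + mu_j)] stays above [(theta0 - A0)/4], which bounds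
   [lambda_j + mu_j] from above.  Since [arccot lambda_j <= B0 < pi], the
   eigenvalues [lambda_j] are bounded below, hence every [mu_j] is bounded. *)

From Stdlib Require Import Reals Lra Lia.
Open Scope R_scope.

Lemma arccot_bounds y : 0 < arccot y < PI.
Proof. unfold arccot. pose proof (atan_bound y). lra. Qed.

Lemma arccot_decreasing x y : x < y -> arccot y < arccot x.
Proof. unfold arccot. intros Hxy. pose proof (atan_increasing _ _ Hxy). lra. Qed.

Lemma arccot_cot t : 0 < t < PI -> arccot (cot t) = t.
Proof.
  intros Ht. unfold arccot, cot.
  replace (cos t / sin t) with (tan (PI / 2 - t)).
  - rewrite atan_tan; lra.
  - unfold tan. rewrite sin_shift, cos_shift. reflexivity.
Qed.

Lemma cot_decreasing a b : 0 < a -> a < b -> b < PI -> cot b < cot a.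
Proof.
  intros Ha Hab Hb. destruct (Rlt_or_le (cot b) (cot a)) as [Hlt | Hle]; [exact Hlt |].
  destruct Hle as [Hlt | Heq].
  - apply arccot_decreasing in Hlt. rewrite !arccot_cot in Hlt; lra.
  - apply (f_equal arccot) in Heq. rewrite !arccot_cot in Heq; lra.
Qed.

Lemma lt_cot_of_lt_arccot y c : 0 < c < PI -> c < arccot y -> y < cot c.
Proof.
  intros Hc Hy. destruct (Rlt_or_le y (cot c)) as [Hlt | [Hlt | Heq]]; [exact Hlt | |].
  - apply arccot_decreasing in Hlt. rewrite arccot_cot in Hlt; lra.
  - subst y. rewrite arccot_cot in Hy; lra.
Qed.

Lemma cot_le_of_arccot_le y b : 0 < b < PI -> arccot y <= b -> cot b <= y.
Proof.
  intros Hb Hy. destruct (Rle_or_lt (cot b) y) as [Hle | Hlt]; [exact Hle |].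
  apply arccot_decreasing in Hlt. rewrite arccot_cot in Hlt; lra.
Qed.

Lemma atan_sub_le x y : x <= y -> atan y - atan x <= y - x.
Proof.
  intros [Hlt | ->]; [| lra].
  destruct (MVT_cor2 atan (fun z => / (1 + z ^ 2)) x y Hlt) as [c [Hmvt _]].
  { intros; apply derivable_pt_lim_atan. }
  rewrite Hmvt.
  assert (Hder : 0 < / (1 + c ^ 2) <= 1).
  { split.
    - apply Rinv_0_lt_compat. nra.
    - rewrite <- Rinv_1. apply Rinv_le_contravar; nra. }
  nra.
Qed.

Lemma arccot_add_le l m d : 0 <= d -> - d <= m -> arccot (l + m) <= arccot l + d.
Proof.
  intros Hd Hm. destruct (Rle_or_lt 0 m) as [[Hpos | <-] | Hneg].
  - pose proof (arccot_decreasing l (l + m) ltac:(lra)). lra.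
  - rewrite Rplus_0_r. lra.
  - unfold arccot. pose proof (atan_sub_le (l + m) l ltac:(lra)). lra.
Qed.

Lemma sumR_le n f g : (forall i, (i < n)%nat -> f i <= g i) -> sumR n f <= sumR n g.
Proof.
  induction n as [| n IH]; simpl; intros Hfg; [lra |].
  pose proof (Hfg n ltac:(lia)).
  assert (sumR n f <= sumR n g) by (apply IH; intros; apply Hfg; lia). lra.
Qed.

Lemma sumR_ext n f g : (forall i, (i < n)%nat -> f i = g i) -> sumR n f = sumR n g.
Proof.
  induction n as [| n IH]; simpl; intros Hfg; [reflexivity |].
  rewrite (Hfg n ltac:(lia)), IH; auto.
Qed.

Lemma sumR_add_const n f c : sumR n (fun i => f i + c) = sumR n f + INR n * c.
Proof. induction n as [| n IH]; [simpl; lra |]. cbn [sumR]. rewrite IH, S_INR. lra. Qed.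

Lemma sumR_const n c : sumR n (fun _ => c) = INR n * c.
Proof. induction n as [| n IH]; [simpl; lra |]. cbn [sumR]. rewrite IH, S_INR. lra. Qed.

Lemma sumR_nonneg n f : (forall i, (i < n)%nat -> 0 <= f i) -> 0 <= sumR n f.
Proof. intros Hf. rewrite <- (Rmult_0_r (INR n)), <- sumR_const. now apply sumR_le. Qed.

Lemma sumR_pos n f : (1 <= n)%nat -> (forall i, (i < n)%nat -> 0 < f i) -> 0 < sumR n f.
Proof.
  destruct n as [| n]; [lia |]. intros _ Hf. cbn [sumR].
  assert (0 <= sumR n f) by (apply sumR_nonneg; intros; apply Rlt_le, Hf; lia).
  pose proof (Hf n ltac:(lia)). lra.
Qed.

Lemma sumR_split n f j : (j < n)%nat ->
  sumR n f = sumR n (fun i => if Nat.eqb i j then 0 else f i) + f j.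
Proof.
  induction n as [| n IH]; simpl; intros Hj; [lia |].
  destruct (Nat.eq_dec j n) as [-> | Hne].
  - rewrite Nat.eqb_refl, (sumR_ext n (fun i => if Nat.eqb i n then 0 else f i) f); [lra |].
    intros i Hi. destruct (Nat.eqb_spec i n); [lia | reflexivity].
  - destruct (Nat.eqb_spec n j); [lia |]. rewrite (IH ltac:(lia)). lra.
Qed.

Lemma theta_split n l j : (j < n)%nat -> theta n l = theta_except n l j + arccot (l j).
Proof. apply sumR_split. Qed.

Lemma theta_pos n l : (1 <= n)%nat -> 0 < theta n l.
Proof. intros Hn. apply sumR_pos; [exact Hn |]. intros i _. apply arccot_bounds. Qed.

Lemma theta_except_nonneg n l j : 0 <= theta_except n l j.
Proof.
  apply sumR_nonneg. intros i _.
  destruct (Nat.eqb i j); [lra | apply Rlt_le, arccot_bounds].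
Qed.

Lemma theta_vadd_le n l mu d : 0 <= d -> (forall i, (i < n)%nat -> - d <= mu i) ->
  theta n (vadd l mu) <= theta n l + INR n * d.
Proof.
  intros Hd Hmu. unfold theta, vadd. rewrite <- sumR_add_const.
  apply sumR_le. intros i Hi. now apply arccot_add_le, Hmu.
Qed.

Lemma theta_except_vadd_le n l mu d j : 0 <= d -> (forall i, (i < n)%nat -> - d <= mu i) ->
  theta_except n (vadd l mu) j <= theta_except n l j + INR n * d.
Proof.
  intros Hd Hmu. unfold theta_except, vadd. rewrite <- sumR_add_const.
  apply sumR_le. intros i Hi.
  destruct (Nat.eqb i j); [lra | now apply arccot_add_le, Hmu].
Qed.

Lemma sqr_le_of_between x a b : 0 <= a -> - a <= x <= b -> x ^ 2 <= (a + Rabs b) ^ 2.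
Proof.
  intros Ha Hx.
  assert (Habs : Rabs x <= a + Rabs b).
  { apply Rabs_le. pose proof (Rle_abs b). pose proof (Rabs_pos b). lra. }
  rewrite <- (pow2_abs x). pose proof (Rabs_pos x). nra.
Qed.

Lemma norm_nt_le_box n mu tau a b b' : 0 <= a ->
  (forall i, (i < n)%nat -> - a <= mu i <= b) -> - a <= tau <= b' ->
  norm_nt n mu tau <= sqrt (INR n * (a + Rabs b) ^ 2 + (a + Rabs b') ^ 2).
Proof.
  intros Ha Hmu Htau. unfold norm_nt. apply sqrt_le_1_alt.
  rewrite <- sumR_const.
  assert (sumR n (fun i => mu i ^ 2) <= sumR n (fun _ => (a + Rabs b) ^ 2)).
  { apply sumR_le. intros i Hi. now apply sqr_le_of_between, Hmu. }
  pose proof (sqr_le_of_between tau a b' Ha Htau). lra.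
Qed.

Lemma exists_scaled_below N a b c : 1 <= N -> 0 < a -> 0 < b -> 0 < c ->
  exists d, 0 < d /\ N * d <= a /\ N * d <= b /\ d <= c.
Proof.
  intros HN Ha Hb Hc. set (m := Rmin (Rmin a b) c).
  assert (Hm : 0 < m /\ m <= a /\ m <= b /\ m <= c).
  { unfold m. pose proof (Rmin_l (Rmin a b) c). pose proof (Rmin_r (Rmin a b) c).
    pose proof (Rmin_l a b). pose proof (Rmin_r a b).
    repeat split; try lra. repeat apply Rmin_glb_lt; lra. }
  exists (m / N). unfold Rdiv.
  replace (N * (m * / N)) with m by (field; lra).
  assert (m * / N <= m).
  { rewrite <- (Rmult_1_r m) at 2. apply Rmult_le_compat_l; [lra |].
    rewrite <- Rinv_1. apply Rinv_le_contravar; lra. }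
  repeat split; try lra. apply Rmult_lt_0_compat; [lra | apply Rinv_0_lt_compat; lra].
Qed.

Section PerturbedSolution.

Variables (n : nat) (theta0 A0 B0 delta tau : R) (l mu : nat -> R).
Hypothesis Hn : (1 <= n)%nat.
Hypothesis Htheta0 : 0 < theta0 < PI.
Hypothesis HA0 : A0 < theta0.
Hypothesis HB0 : B0 < PI.
Hypothesis Hl_except : forall j, (j < n)%nat -> theta_except n l j <= A0.
Hypothesis Hl : theta n l <= B0.
Hypothesis Hdelta : 0 <= delta.
Hypothesis Hdelta_B : INR n * delta <= (PI - B0) / 2.
Hypothesis Hdelta_A : INR n * delta <= (theta0 - A0) / 4.
Hypothesis Hdelta_gap : delta <= cot ((A0 + theta0) / 2) - cot theta0.
Hypothesis Hmu : forall i, (i < n)%nat -> - delta <= mu i.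
Hypothesis Htau : - delta < tau.
Hypothesis Hequation : cot (theta n (vadd l mu)) + tau = cot theta0.

Lemma theta_vadd_le_mid : theta n (vadd l mu) <= (B0 + PI) / 2.
Proof. pose proof (theta_vadd_le n l mu delta Hdelta Hmu). lra. Qed.

Lemma tau_le : tau <= cot theta0 - cot ((B0 + PI) / 2).
Proof.
  pose proof (theta_pos n (vadd l mu) Hn).
  destruct theta_vadd_le_mid as [Hlt | Heq].
  - pose proof (cot_decreasing (theta n (vadd l mu)) ((B0 + PI) / 2) ltac:(lra) Hlt ltac:(lra)). lra.
  - rewrite <- Heq. lra.
Qed.

Lemma theta_vadd_gt_mid : (A0 + theta0) / 2 < theta n (vadd l mu).
Proof.
  pose proof (theta_pos n (vadd l mu) Hn).
  destruct (Rlt_or_le ((A0 + theta0) / 2) (theta n (vadd l mu))) as [Hlt | [Hlt | Heq]];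
    [exact Hlt | |].
  - pose proof (cot_decreasing (theta n (vadd l mu)) ((A0 + theta0) / 2) ltac:(lra) Hlt ltac:(lra)). lra.
  - rewrite Heq in Hequation. lra.
Qed.

Lemma mu_lt j : (j < n)%nat -> mu j < cot ((theta0 - A0) / 4) - cot B0.
Proof.
  intros Hj.
  pose proof (theta_except_nonneg n l j). pose proof (Hl_except j Hj).
  pose proof (theta_vadd_gt_mid).
  pose proof (theta_except_vadd_le n l mu delta j Hdelta Hmu).
  pose proof (theta_split n (vadd l mu) j Hj) as Hsplit. unfold vadd at 3 in Hsplit.
  assert (Hupper : l j + mu j < cot ((theta0 - A0) / 4)).
  { apply lt_cot_of_lt_arccot; lra. }
  assert (Hlower : cot B0 <= l j).
  { pose proof (theta_split n l j Hj). pose proof (theta_pos n l Hn).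
    apply cot_le_of_arccot_le; lra. }
  lra.
Qed.

End PerturbedSolution.

Theorem lemma2p7 (M : Type) (n : nat) (Hn : (1 <= n)%nat)
  (lam : M -> nat -> R) (theta0 : R)
  (Htheta0 : 0 < theta0 < PI)
  (A0 B0 : R)
  (HA0max : (forall x j, (j < n)%nat -> theta_except n (lam x) j <= A0) /\
            (exists x j, (j < n)%nat /\ theta_except n (lam x) j = A0))
  (HB0max : (forall x, theta n (lam x) <= B0) /\
            (exists x, theta n (lam x) = B0))
  (HA0 : A0 < theta0) (HB0 : B0 < PI) :
  exists delta K : R, 0 < delta /\ 0 < K /\
    forall (x : M) (t : R), 0 <= t ->
    forall (mu : nat -> R) (tau : R),
      cot (theta n (vadd (lam x) mu)) - 0 + tau = cot theta0 ->
      (forall i, (i < n)%nat -> mu i > - delta) ->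
      tau > - delta ->
      norm_nt n mu tau <= K.
Proof.
  destruct HA0max as [HA [xA [jA [_ HA0_attained]]]], HB0max as [HB _].
  assert (HA0_nonneg : 0 <= A0) by (rewrite <- HA0_attained; apply theta_except_nonneg).
  assert (Hgap : 0 < cot ((A0 + theta0) / 2) - cot theta0).
  { pose proof (cot_decreasing ((A0 + theta0) / 2) theta0 ltac:(lra) ltac:(lra) ltac:(lra)). lra. }
  assert (HB_margin : 0 < (PI - B0) / 2) by lra.
  assert (HA_margin : 0 < (theta0 - A0) / 4) by lra.
  destruct (exists_scaled_below (INR n) _ _ _ (le_INR 1 n Hn) HB_margin HA_margin Hgap)
    as [delta (Hdelta & Hdelta_B & Hdelta_A & Hdelta_gap)].
  set (a := delta + Rabs (cot ((theta0 - A0) / 4) - cot B0)).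
  set (b := delta + Rabs (cot theta0 - cot ((B0 + PI) / 2))).
  exists delta, (sqrt (INR n * a ^ 2 + b ^ 2)). split; [exact Hdelta |]. split.
  { assert (Hb : 0 < b).
    { pose proof (Rabs_pos (cot theta0 - cot ((B0 + PI) / 2))). unfold b. lra. }
    apply sqrt_lt_R0. pose proof (pos_INR n). pose proof (pow2_ge_0 a).
    pose proof (pow_lt b 2 Hb). nra. }
  intros x _ _ mu tau Hequation Hmu Htau. rewrite Rminus_0_r in Hequation.
  assert (Hmu_ge : forall i, (i < n)%nat -> - delta <= mu i) by (intros i Hi; apply Rlt_le, Hmu, Hi).
  apply norm_nt_le_box; [lra | intros j Hj; split | split].
  - apply Hmu_ge, Hj.
  - apply Rlt_le, (mu_lt n theta0 A0 B0 delta tau (lam x) mu); auto; lra.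
  - lra.
  - apply (tau_le n theta0 B0 delta tau (lam x) mu); auto; lra.
Qed.
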